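(* Let $\gamma_X$ and $\gamma_Y$ be any two dynamic metric spaces. Then \[d_{\mathrm{I}}(\beta_0^{\gamma_X},\beta_0^{\gamma_Y})\le 2\cdot d_{\mathtt{dyn}}(\gamma_X,\gamma_Y).\]
   Context: A dynamic metric space (DMS) is a pair $\gamma_X=(X,d_X(\cdot))$ where $X$ is a nonempty finite set and $d_X(\cdot):\mathbf{R}\times X\times X\to\mathbf{R}_+$ satisfies: each $d_X(t)$ is a pseudometric, some $d_X(t_0)$ is a metric, and $t\mapsto d_X(t)(x,x')$ is continuous for all $x,x'$. $\mathbf{Int}$ is the set of finite closed intervals of $\mathbf{R}$. For $I\in\mathbf{Int}$, $(\bigvee_I d_X)(x,x'):=\min_{s\in I}d_X(s)(x,x')$; for $I=[u,u']$, $I^\varepsilon=[u-\varepsilon,u'+\varepsilon]$, and $[t]^\varepsilon=[t-\varepsilon,t+\varepsilon]$. A tripod between $X$ and $Y$ is a set $Z$ with surjections $\varphi_X:Z\to X$, $\varphi_Y:Z\to Y$; it is an $\varepsilon$-tripod between $\gamma_X,\gamma_Y$ if for all $t\in\mathbf{R}$, $z,z'\in Z$: $(\bigvee_{[t]^\varepsilon}d_X)(\varphi_X(z),\varphi_X(z'))\le d_Y(t)(\varphi_Y(z),\varphi_Y(z'))+2\varepsilon$ and $(\bigvee_{[t]^\varepsilon}d_Y)(\varphi_Y(z),\varphi_Y(z'))\le d_X(t)(\varphi_X(z),\varphi_X(z'))+2\varepsilon$. $d_{\mathtt{dyn}}(\gamma_X,\gamma_Y)$ is the minimum over tripods of the infimum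 of $\varepsilon$ for which the tripod is an $\varepsilon$-tripod ($\infty$ if none). For symmetric $d$ vanishing on the diagonal, $\mathcal{R}_\delta(X,d)$ is the simplicial complex on $X$ with simplices the nonempty $\sigma$ with $d(x,x')\le\delta$ for all $x,x'\in\sigma$. The Betti-0 function $\beta_0^{\gamma_X}:\mathbf{Int}\times\mathbf{R}_+\to\mathbf{Z}_+$ sends $(I,\delta)$ to $\dim\mathrm{H}_0(\mathcal{R}_\delta(X,\bigvee_I d_X))$ (homology over a fixed field). For functions $F,G:\mathbf{Int}\times\mathbf{R}_+\to\mathbf{Z}_+$, $d_{\mathrm{I}}(F,G):=\inf\{\varepsilon\ge0:\forall (I,\delta),\ F(I,\delta)\ge G(I^\varepsilon,\delta+\varepsilon)\text{ and }G(I,\delta)\ge F(I^\varepsilon,\delta+\varepsilon)\}$. *)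

From HB Require Import structures.
From mathcomp Require Import all_boot all_order all_algebra.
From mathcomp Require Import all_classical all_reals all_analysis.
Set Implicit Arguments. Unset Strict Implicit. Unset Printing Implicit Defensive.
Import Order.TTheory GRing.Theory Num.Theory.
Import numFieldNormedType.Exports.
Local Open Scope classical_set_scope.
Local Open Scope ring_scope.

Section DMS.
Variable R : realType.

Definition is_pseudometric (X : Type) (d : X -> X -> R) : Prop :=
  [/\ forall x y, 0 <= d x y,
      forall x, d x x = 0,
      forall x y, d x y = d y x &
      forall x y z, d x z <= d x y + d y z].

Definition is_DMS (X : finType) (d : R -> X -> X -> R) : Prop :=
  [/\ (0 < #|X|)%N,
      forall t, is_pseudometric (d t),
      exists t0, forall x y, d t0 x y = 0 -> x = y &
      forall x y, continuous (fun t : R => d t x y)].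

(* finite closed intervals [u, u'] are represented by pairs (u, u') with u <= u' *)
(* (\bigvee_I d)(x,x') = min_{s in I} d(s)(x,x')  (min = inf, by continuity/compactness) *)
Definition bigvee (X : Type) (d : R -> X -> X -> R) (I : R * R) (x y : X) : R :=
  inf [set d s x y | s in `[I.1, I.2]].

Definition int_eps (I : R * R) (e : R) : R * R := (I.1 - e, I.2 + e).

Definition rips_simplex (X : finType) (dd : X -> X -> R) (delta : R) (s : {set X}) : bool :=
  (s != finset.set0) && [forall x in s, forall y in s, dd x y <= delta].

(* Boundary map d_1 : C_1 -> C_0 of the Rips complex over the field F, as a matrix
   whose rows are the boundaries y - x of the (oriented) 1-simplices {x, y}
   (one row per ordered pair (x,y); rows for non-edges are 0, which does not
   change the image). *)
Definition rips_boundary1 (F : fieldType) (X : finType) (dd : X -> X -> R) (delta : R)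
  : 'M[F]_(#|{: X * X}|, #|{: X}|) :=
  \matrix_(i, j)
    let p : X * X := enum_val i in
    let v : X := enum_val j in
    if (p.1 != p.2) && rips_simplex dd delta [set p.1; p.2]
    then ((v == p.2)%:R - (v == p.1)%:R) else 0.

Definition dimH0_rips (F : fieldType) (X : finType) (dd : X -> X -> R) (delta : R) : nat :=
  (#|{: X}| - \rank (rips_boundary1 F dd delta))%N.

Definition beta0 (F : fieldType) (X : finType) (d : R -> X -> X -> R)
  (I : R * R) (delta : R) : nat :=
  dimH0_rips F (bigvee d I) delta.

Definition interleaved (Fn Gn : R * R -> R -> nat) (e : R) : Prop :=
  0 <= e /\
  forall (I : R * R) (delta : R), I.1 <= I.2 -> 0 <= delta ->
    (Gn (int_eps I e) (delta + e)%R <= Fn I delta)%N /\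
    (Fn (int_eps I e) (delta + e)%R <= Gn I delta)%N.

Definition dI (Fn Gn : R * R -> R -> nat) : \bar R :=
  ereal_inf [set (e%:E) | e in interleaved Fn Gn].

Definition is_eps_tripod (X Y Z : Type) (dX : R -> X -> X -> R) (dY : R -> Y -> Y -> R)
  (phX : Z -> X) (phY : Z -> Y) (e : R) : Prop :=
  forall (t : R) (z z' : Z),
    bigvee dX (t - e, t + e) (phX z) (phX z') <= dY t (phY z) (phY z') + 2 * e /\
    bigvee dY (t - e, t + e) (phY z) (phY z') <= dX t (phX z) (phX z') + 2 * e.

Definition tripod_cost (X Y Z : Type) (dX : R -> X -> X -> R) (dY : R -> Y -> Y -> R)
  (phX : Z -> X) (phY : Z -> Y) : \bar R :=
  ereal_inf [set (e%:E) | e in is_eps_tripod dX dY phX phY].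

Definition surj (A B : Type) (f : A -> B) : Prop := forall b, exists a, f a = b.

Definition ddyn (X Y : Type) (dX : R -> X -> X -> R) (dY : R -> Y -> Y -> R) : \bar R :=
  ereal_inf [set c | exists (Z : Type) (phX : Z -> X) (phY : Z -> Y),
                       [/\ surj phX, surj phY & c = tripod_cost dX dY phX phY]].

End DMS.

From Pilot Require Import Defs.
From HB Require Import structures.
From mathcomp Require Import all_boot all_order all_algebra.
From mathcomp Require Import all_classical all_reals all_analysis.
From mathcomp Require Import lra zify.

(* An eps-tripod sends a pair of points that are delta-close somewhere in I
   (in X) to a pair that is (delta + 2 eps)-close somewhere in I^(2 eps) (in Y):
   approximate the minimum over I at some s, cross over with the tripod at s,
   and approximate again inside [s - eps, s + eps].  Choosing a section of
   Z -> X, the tripod thus induces a map X -> Y sending edges of the first Rips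
   complex to edges of the second and reaching every vertex of the second in
   one step; such a map is surjective on H_0, whence
   beta0_Y(I^(2 eps), delta + 2 eps) <= beta0_X(I, delta) and symmetrically. *)

Set Implicit Arguments. Unset Strict Implicit. Unset Printing Implicit Defensive.
Import Order.TTheory GRing.Theory Num.Theory.
Local Open Scope ring_scope.

Section Bigvee.
Local Open Scope classical_set_scope.
Variables (R : realType) (T : Type) (d : R -> T -> T -> R) (x y : T).
Hypothesis d_ge0 : forall t, 0 <= d t x y.

Lemma bigvee_ge0 I : 0 <= bigvee d I x y.
Proof.
rewrite /bigvee.
have [->|/set0P ne] := eqVneq [set d s x y | s in `[I.1, I.2]] set0.
  by rewrite inf0.
by apply: lb_le_inf => // _ [t _ <-].
Qed.

Lemma bigvee_le I s : I.1 <= s <= I.2 -> bigvee d I x y <= d s x y.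
Proof.
move=> Is; apply: ge_inf; first by exists 0 => _ [t _ <-].
by exists s => //=; rewrite in_itv.
Qed.

Lemma bigvee_adherent I eta : I.1 <= I.2 -> 0 < eta ->
  exists2 s, I.1 <= s <= I.2 & d s x y < bigvee d I x y + eta.
Proof.
move=> I12 eta_gt0.
have [|_ [s Is <-] lt_s] :=
  @inf_adherent R [set d s x y | s in `[I.1, I.2]] eta eta_gt0.
  split; last by exists 0 => _ [t _ <-].
  by exists (d I.1 x y), I.1 => //=; rewrite in_itv /= lexx I12.
by exists s => //; move: Is; rewrite /= in_itv.
Qed.

End Bigvee.

Section RipsH0.
Variables (R : realType) (F : fieldType).

Definition vertex_row (X : finType) (x : X) : 'rV[F]_#|{: X}| :=
  delta_mx 0 (enum_rank x).

Definition vertex_map_mx (X Y : finType) (f : X -> Y)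
    : 'M[F]_(#|{: X}|, #|{: Y}|) :=
  \matrix_(i, j) (f (enum_val i) == enum_val j)%:R.

Lemma eq_enum_rank (X : finType) (j : 'I_#|{: X}|) (x : X) :
  (j == enum_rank x) = (enum_val j == x).
Proof. by apply/eqP/eqP => [->|<-]; rewrite ?enum_rankK ?enum_valK. Qed.

Lemma vertex_row_mul_map (X Y : finType) (f : X -> Y) (x : X) :
  vertex_row x *m vertex_map_mx f = vertex_row (f x).
Proof.
rewrite -rowE; apply/rowP => j.
by rewrite !mxE enum_rankK eq_enum_rank eq_sym.
Qed.

Lemma rips_simplex_pairP (X : finType) (dd : X -> X -> R) delta x y :
  reflect {in [set x; y] &, forall a b, dd a b <= delta}
          (rips_simplex dd delta [set x; y]).
Proof.
apply: (iffP andP) => [[_ /forall_inP h] a b Ha Hb|h].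
  by move/forall_inP: (h a Ha); apply.
split; first by apply/set0Pn; exists x; rewrite set21.
by apply/forall_inP => a Ha; apply/forall_inP => b Hb; exact: h.
Qed.

Lemma row_rips_boundary1 (X : finType) (dd : X -> X -> R) delta i :
  row i (rips_boundary1 F dd delta) =
  if ((enum_val i).1 != (enum_val i).2) &&
     rips_simplex dd delta [set (enum_val i).1; (enum_val i).2]
  then vertex_row (enum_val i).2 - vertex_row (enum_val i).1 else 0.
Proof.
by apply/rowP => j; rewrite !mxE /=; case: ifP => _; rewrite ?mxE ?eq_enum_rank.
Qed.

Lemma rips_edge_sub (X : finType) (dd : X -> X -> R) delta x y :
  rips_simplex dd delta [set x; y] ->
  (vertex_row y - vertex_row x <= rips_boundary1 F dd delta)%MS.
Proof.
move=> xy_simplex; have [->|x_neq_y] := eqVneq x y; first by rewrite subrr sub0mx.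
have <- : row (enum_rank (x, y)) (rips_boundary1 F dd delta) =
          vertex_row y - vertex_row x.
  by rewrite row_rips_boundary1 enum_rankK /= x_neq_y xy_simplex.
exact: row_sub.
Qed.

(* The rank count: with D_X, D_Y the boundary matrices and M the matrix of f,
   1 <= M + D_Y <= D_Y + D_X^C M because D_X M <= D_Y. *)
Lemma dimH0_rips_le_map (X Y : finType) (ddX : X -> X -> R) (ddY : Y -> Y -> R)
    (deltaX deltaY : R) (f : X -> Y) :
  (forall x x', rips_simplex ddX deltaX [set x; x'] ->
                rips_simplex ddY deltaY [set f x; f x']) ->
  (forall y, exists x, rips_simplex ddY deltaY [set f x; y]) ->
  (dimH0_rips F ddY deltaY <= dimH0_rips F ddX deltaX)%N.
Proof.
move=> f_edge f_reach.
pose DX := rips_boundary1 F ddX deltaX; pose DY := rips_boundary1 F ddY deltaY.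
pose M := vertex_map_mx f.
have DXM_sub : (DX *m M <= DY)%MS.
  apply/row_subP => i; rewrite row_mul row_rips_boundary1.
  case: ifP => [/andP[_ edge]|_]; last by rewrite mul0mx sub0mx.
  by rewrite mulmxBl !vertex_row_mul_map; apply/rips_edge_sub/f_edge.
have M_DY_full : (1%:M <= M + DY)%MS.
  apply/row_subP => j; rewrite row1 -[j]enum_valK -/(vertex_row _).
  have [x edge] := f_reach (enum_val j).
  rewrite -[vertex_row _](subrK (vertex_row (f x))) addsmxC addmx_sub_adds //.
    exact: rips_edge_sub.
  by rewrite -vertex_row_mul_map submxMl.
have M_DY_sub : (M + DY <= DY + DX^C *m M)%MS.
  rewrite addsmx_sub addsmxSl andbT.
  have M_sub : (M <= (DX + DX^C)%MS *m M)%MS.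
    by rewrite -{1}[M]mul1mx submxMr // sub1mx addsmx_compl_full.
  by apply: submx_trans M_sub _; rewrite addsmxMr addsmxS.
have := mxrankS M_DY_full; rewrite mxrank1 => rk_full.
have := mxrankS M_DY_sub => rk_sub.
have := (mxrank_adds_leqif DY ((DX^C)%MS *m M)).1 => rk_adds.
have := mxrankM_maxl (DX^C)%MS M; rewrite mxrank_compl => rk_compl.
have := rank_leq_col DX => rk_DX.
rewrite /dimH0_rips -/DX -/DY; lia.
Qed.

Lemma dimH0_rips_le_tripod (X Y : finType) (Z : Type)
    (ddX : X -> X -> R) (ddY : Y -> Y -> R) (deltaX deltaY : R)
    (phX : Z -> X) (phY : Z -> Y) :
  Defs.surj phX -> Defs.surj phY -> (forall x, ddX x x <= deltaX) ->
  (forall z z', ddX (phX z) (phX z') <= deltaX ->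
                ddY (phY z) (phY z') <= deltaY) ->
  (dimH0_rips F ddY deltaY <= dimH0_rips F ddX deltaX)%N.
Proof.
move=> phX_surj phY_surj ddX_diag close.
have [g phXK] := choice phX_surj.
apply: (@dimH0_rips_le_map _ _ _ _ _ _ (fun x => phY (g x))).
  move=> x x' /rips_simplex_pairP xx'_close; apply/rips_simplex_pairP.
  move=> _ _ /set2P[]-> /set2P[]->; apply: close; rewrite !phXK;
    by apply: xx'_close; rewrite ?set21 ?set22.
move=> y; have [z <-] := phY_surj y; exists (phX z); apply/rips_simplex_pairP.
by move=> _ _ /set2P[]-> /set2P[]->; apply: close; rewrite ?phXK.
Qed.

End RipsH0.

Section TripodBeta0.
Variables (R : realType) (X Y : finType) (Z : Type).
Variables (dX : R -> X -> X -> R) (dY : R -> Y -> Y -> R).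
Variables (phX : Z -> X) (phY : Z -> Y).
Hypotheses (dX_ge0 : forall t a b, 0 <= dX t a b)
           (dY_ge0 : forall t a b, 0 <= dY t a b).

Lemma is_eps_tripod_sym e :
  is_eps_tripod dX dY phX phY e -> is_eps_tripod dY dX phY phX e.
Proof. by move=> tri t z z'; have [] := tri t z z'. Qed.

Lemma tripod_eps_ge0 e (z : Z) :
  dY 0 (phY z) (phY z) = 0 -> is_eps_tripod dX dY phX phY e -> 0 <= e.
Proof.
move=> dY_diag tri; have [+ _] := tri 0 z z; rewrite dY_diag.
by have := bigvee_ge0 (fun t => dX_ge0 t (phX z) (phX z)) (0 - e, 0 + e); lra.
Qed.

Lemma tripod_bigvee_le e I delta z z' :
  is_eps_tripod dX dY phX phY e -> 0 <= e -> I.1 <= I.2 ->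
  bigvee dX I (phX z) (phX z') <= delta ->
  bigvee dY (int_eps I (2 * e)) (phY z) (phY z') <= delta + 2 * e.
Proof.
move=> tri e_ge0 I12 close; apply/ler_addgt0Pr => eta eta_gt0.
have eta2_gt0 : 0 < eta / 2 by rewrite divr_gt0.
have [s Is dXs] :=
  bigvee_adherent (fun t => dX_ge0 t (phX z) (phX z')) I12 eta2_gt0.
have [_ cross] := tri s z z'.
have se12 : (s - e, s + e).1 <= (s - e, s + e).2 by rewrite /=; lra.
have [s' s's dYs'] :=
  bigvee_adherent (fun t => dY_ge0 t (phY z) (phY z')) se12 eta2_gt0.
have s'I : (int_eps I (2 * e)).1 <= s' <= (int_eps I (2 * e)).2.
  by move: Is s's => /= /andP[? ?] /andP[? ?]; apply/andP; split; lra.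
by apply: le_trans (bigvee_le (fun t => dY_ge0 t _ _) s'I) _; lra.
Qed.

Lemma beta0_tripod_le (F : fieldType) e I delta :
  (forall t a, dX t a a = 0) -> Defs.surj phX -> Defs.surj phY ->
  is_eps_tripod dX dY phX phY e -> 0 <= e -> I.1 <= I.2 -> 0 <= delta ->
  (beta0 F dY (int_eps I (2 * e)) (delta + 2 * e) <= beta0 F dX I delta)%N.
Proof.
move=> dX_diag phX_surj phY_surj tri e_ge0 I12 delta_ge0.
apply: dimH0_rips_le_tripod phX_surj phY_surj _ _ => [x|z z'].
  have I1 : I.1 <= I.1 <= I.2 by rewrite lexx I12.
  by apply: le_trans (bigvee_le (fun t => dX_ge0 t x x) I1) _; rewrite dX_diag.
exact: tripod_bigvee_le.
Qed.

End TripodBeta0.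

Lemma is_DMS_ge0 (R : realType) (X : finType) (d : R -> X -> X -> R) :
  is_DMS d -> forall t x y, 0 <= d t x y.
Proof. by case=> _ d_pm _ _ t; case: (d_pm t). Qed.

Lemma is_DMS_diag (R : realType) (X : finType) (d : R -> X -> X -> R) :
  is_DMS d -> forall t x, d t x x = 0.
Proof. by case=> _ d_pm _ _ t; case: (d_pm t). Qed.

Lemma tripod_interleaved (R : realType) (F : fieldType) (X Y : finType) (Z : Type)
    (dX : R -> X -> X -> R) (dY : R -> Y -> Y -> R)
    (phX : Z -> X) (phY : Z -> Y) e :
  is_DMS dX -> is_DMS dY -> Defs.surj phX -> Defs.surj phY ->
  is_eps_tripod dX dY phX phY e -> interleaved (beta0 F dX) (beta0 F dY) (2 * e).
Proof.
move=> dX_dms dY_dms phX_surj phY_surj tri.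
have [dX_ge0 dX_diag] := (is_DMS_ge0 dX_dms, is_DMS_diag dX_dms).
have [dY_ge0 dY_diag] := (is_DMS_ge0 dY_dms, is_DMS_diag dY_dms).
have /card_gt0P[x0 _] : (0 < #|X|)%N by case: dX_dms.
have [z _] := phX_surj x0.
have e_ge0 := tripod_eps_ge0 dX_ge0 (dY_diag 0 (phY z)) tri.
split=> [|I delta I12 delta_ge0]; first by rewrite mulr_ge0.
split; first exact: beta0_tripod_le.
exact: beta0_tripod_le (is_eps_tripod_sym tri) _ _ _.
Qed.

Lemma le_pmul_ereal_inf (R : realType) (r : R) (a : \bar R) (S : set \bar R) :
  0 < r -> (forall c, S c -> (a <= r%:E * c)%E) -> (a <= r%:E * ereal_inf S)%E.
Proof.
move=> r_gt0 le_aS; rewrite -ereal_inf_pZl //.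
by apply: le_ereal_inf_tmp => _ [c /le_aS ? <-].
Qed.

Theorem theorem4p5 (R : realType) (F : fieldType) (X Y : finType)
  (dX : R -> X -> X -> R) (dY : R -> Y -> Y -> R) :
  is_DMS dX -> is_DMS dY ->
  (dI (beta0 F dX) (beta0 F dY) <= 2%:E * ddyn dX dY)%E.
Proof.
move=> dX_dms dY_dms.
apply: le_pmul_ereal_inf => // _ [Z [phX [phY [phX_surj phY_surj ->]]]].
apply: le_pmul_ereal_inf => // _ [e tri <-]; rewrite -EFinM.
by apply: ereal_inf_lbound; exists (2 * e); first exact: tripod_interleaved tri.
Qed.
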